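(* There exist $a_1\ge1$ and $b_1\in(0,1)$, depending only on $\alpha$, such that for every $a>a_1$ and every $b\in(0,b_1)$ the following holds: if $p,q\in\mathbb H$ satisfy $p\notin B(q,r_q)$ and $q\notin B(p,r_p)$, then at most one of $p,q$ belongs to $\mathcal T(a,b)$.
   Context: $\mathbb H=\mathbb R^3$, $p=(x_p,y_p,z_p)$, $\rho_p=\sqrt{x_p^2+y_p^2}$, group law $(x,y,z)\cdot(x',y',z')=(x+x',y+y',z+z'+\tfrac12(xy'-yx'))$, dilations $\delta_\lambda(x,y,z)=(\lambda x,\lambda y,\lambda^2z)$. Fix $\alpha>0$ such that $d_\alpha(p,q)=\inf\{r>0:\delta_{1/r}(p^{-1}\cdot q)\in B_\alpha\}$ is a distance, $B_\alpha$ the closed Euclidean ball of radius $\alpha$ at $0$. $B(p,r)=\{q:d_\alpha(q,p)\le r\}$, $r_p=d_\alpha(0,p)$. $\mathcal T(a,b)=\{p: z_p<-a,\ \rho_p<b\}$. *)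

From Stdlib Require Import Reals Lra ClassicalEpsilon.
Open Scope R_scope.

(* Heisenberg group H = R^3 with exponential coordinates *)
Record Hpt := mkH { hx : R; hy : R; hz : R }.

Definition hmul (p q : Hpt) : Hpt :=
  mkH (hx p + hx q) (hy p + hy q)
      (hz p + hz q + / 2 * (hx p * hy q - hy p * hx q)).

Definition hinv (p : Hpt) : Hpt := mkH (- hx p) (- hy p) (- hz p).

Definition h0 : Hpt := mkH 0 0 0.

Definition dil (l : R) (p : Hpt) : Hpt := mkH (l * hx p) (l * hy p) (l * l * hz p).

Definition in_Balpha (alpha : R) (p : Hpt) : Prop :=
  hx p ^ 2 + hy p ^ 2 + hz p ^ 2 <= alpha ^ 2.

Definition dset (alpha : R) (p q : Hpt) (r : R) : Prop :=
  r > 0 /\ in_Balpha alpha (dil (/ r) (hmul (hinv p) q)).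

Definition is_inf (S : R -> Prop) (m : R) : Prop :=
  (forall r, S r -> m <= r) /\ (forall m', (forall r, S r -> m' <= r) -> m' <= m).

Definition d_alpha (alpha : R) (p q : Hpt) : R :=
  epsilon (inhabits 0) (fun m => is_inf (dset alpha p q) m).

Definition is_distance (d : Hpt -> Hpt -> R) : Prop :=
  (forall p q, 0 <= d p q) /\
  (forall p q, d p q = 0 <-> p = q) /\
  (forall p q, d p q = d q p) /\
  (forall p q s, d p s <= d p q + d q s).

Definition ball (alpha : R) (p : Hpt) (r : R) (q : Hpt) : Prop :=
  d_alpha alpha q p <= r.

Definition r_of (alpha : R) (p : Hpt) : R := d_alpha alpha h0 p.

Definition rho (p : Hpt) : R := sqrt (hx p ^ 2 + hy p ^ 2).

Definition inT (a b : R) (p : Hpt) : Prop := hz p < - a /\ rho p < b.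

(* If p and q both lie in T(a,b) and q is the lower one (z_q <= z_p), then
   d(p,q) <= d(0,q), i.e. p lies in B(q, r_q).  Indeed every dilation δ_{1/r}
   sending q into B_α also sends p^{-1}q into B_α: the horizontal part of
   p^{-1}q has norm < 1, and its height is at most |z_q| - a/2 in absolute
   value.  At large scale s = r^{-2} the vertical saving s^2 |z_q| a dominates
   the horizontal cost s; at small scale both terms are O(1/a^2) < α^2. *)

From Stdlib Require Import Reals Lra Psatz ClassicalEpsilon.
Open Scope R_scope.

Lemma is_inf_exists (S : R -> Prop) :
  (exists r, S r) -> (exists m, forall r, S r -> m <= r) -> exists m, is_inf S m.
Proof.
  intros [r0 Hr0] [m0 Hm0].
  destruct (completeness (fun x => S (- x))) as [l [Hub Hleast]].
  - exists (- m0). intros x Hx. specialize (Hm0 _ Hx). lra.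
  - exists (- r0). now rewrite Ropp_involutive.
  - exists (- l). split.
    + intros r Hr. enough (- r <= l) by lra.
      apply Hub. now rewrite Ropp_involutive.
    + intros m Hm. enough (l <= - m) by lra.
      apply Hleast. intros x Hx. specialize (Hm _ Hx). lra.
Qed.

Lemma is_inf_le_subset (A B : R -> Prop) (ma mb : R) :
  is_inf A ma -> is_inf B mb -> (forall r, A r -> B r) -> mb <= ma.
Proof.
  intros [_ HA] [HB _] Hsub. apply HA. intros r Hr. apply HB, Hsub, Hr.
Qed.

Definition hsq (p : Hpt) : R := hx p ^ 2 + hy p ^ 2.

Lemma in_Balpha_dil (alpha u : R) (v : Hpt) :
  in_Balpha alpha (dil u v) <-> u ^ 2 * hsq v + (u ^ 2) ^ 2 * hz v ^ 2 <= alpha ^ 2.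
Proof.
  unfold in_Balpha, dil, hsq; cbn [hx hy hz].
  replace ((u * hx v) ^ 2 + (u * hy v) ^ 2 + (u * u * hz v) ^ 2)
    with (u ^ 2 * (hx v ^ 2 + hy v ^ 2) + (u ^ 2) ^ 2 * hz v ^ 2) by ring.
  reflexivity.
Qed.

Lemma dil_in_Balpha_exists (alpha : R) (v : Hpt) :
  0 < alpha -> exists u, 0 < u /\ in_Balpha alpha (dil u v).
Proof.
  intros Halpha. set (N := hsq v + hz v ^ 2).
  assert (Hz : 0 <= hz v ^ 2) by nra.
  assert (Hh : 0 <= hsq v) by (unfold hsq; nra).
  set (u := alpha / (alpha + 1 + N)).
  exists u. split; [apply Rdiv_lt_0_compat; unfold N; lra|].
  apply in_Balpha_dil.
  assert (HuN : u * (alpha + 1 + N) = alpha) by (unfold u, N; field; lra).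
  (* [u <= min 1 alpha] and [u * N <= alpha], hence [u^2 N <= alpha^2] *)
  assert (Hu : 0 < u) by (apply Rdiv_lt_0_compat; unfold N; lra).
  assert (u <= 1) by (unfold N in *; nra).
  assert (u <= alpha) by (unfold N in *; nra).
  assert (u * N <= alpha) by (unfold N in *; nra).
  assert (Hu4 : (u ^ 2) ^ 2 * hz v ^ 2 <= u ^ 2 * hz v ^ 2).
  { apply Rmult_le_compat_r; [lra|].
    assert (Hu2 : 0 <= u ^ 2 <= 1) by (split; nra).
    pose proof (Rmult_le_compat_l (u ^ 2) (u ^ 2) 1 (proj1 Hu2) (proj2 Hu2)).
    lra. }
  assert (u * (u * N) <= alpha ^ 2).
  { replace (alpha ^ 2) with (alpha * alpha) by ring. apply Rmult_le_compat; try lra.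
    apply Rmult_le_pos; unfold N; lra. }
  replace (u * (u * N)) with (u ^ 2 * hsq v + u ^ 2 * hz v ^ 2) in * by (unfold N; ring).
  lra.
Qed.

Lemma dset_nonempty (alpha : R) (p q : Hpt) : 0 < alpha -> exists r, dset alpha p q r.
Proof.
  intros Halpha.
  destruct (dil_in_Balpha_exists alpha (hmul (hinv p) q) Halpha) as [u [Hu Hin]].
  exists (/ u). split.
  - now apply Rinv_0_lt_compat.
  - now rewrite Rinv_inv.
Qed.

Lemma d_alpha_is_inf (alpha : R) (p q : Hpt) :
  0 < alpha -> is_inf (dset alpha p q) (d_alpha alpha p q).
Proof.
  intros Halpha. unfold d_alpha. apply epsilon_spec, is_inf_exists.
  - now apply dset_nonempty.
  - exists 0. intros r [Hr _]. lra.
Qed.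

Lemma hsq_lt_of_rho_lt (p : Hpt) (b : R) : 0 < b -> rho p < b -> hsq p < b ^ 2.
Proof.
  intros Hb Hrho. apply sqrt_lt_0_alt. now rewrite sqrt_pow2 by lra.
Qed.

Lemma cross_sq_le (p q : Hpt) : (hx p * hy q - hy p * hx q) ^ 2 <= hsq p * hsq q.
Proof.
  unfold hsq.
  replace ((hx p ^ 2 + hy p ^ 2) * (hx q ^ 2 + hy q ^ 2))
    with ((hx p * hy q - hy p * hx q) ^ 2 + (hx p * hx q + hy p * hy q) ^ 2) by ring.
  pose proof (pow2_ge_0 (hx p * hx q + hy p * hy q)). lra.
Qed.

Lemma hsq_hinv_mul_le (p q : Hpt) : hsq (hmul (hinv p) q) <= 2 * hsq p + 2 * hsq q.
Proof.
  unfold hsq, hmul, hinv; cbn [hx hy hz].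
  pose proof (pow2_ge_0 (hx p + hx q)). pose proof (pow2_ge_0 (hy p + hy q)). nra.
Qed.

Lemma hz_hinv_mul (p q : Hpt) :
  hz (hmul (hinv p) q) = hz q - hz p - / 2 * (hx p * hy q - hy p * hx q).
Proof. unfold hmul, hinv; cbn [hx hy hz]. ring. Qed.

Lemma hz_hinv_mul_sq_le (a : R) (p q : Hpt) :
  1 <= a -> hz p < - a -> hz q <= hz p -> (hx p * hy q - hy p * hx q) ^ 2 < 1 ->
  hz (hmul (hinv p) q) ^ 2 <= (- hz q - a / 2) ^ 2.
Proof.
  intros Ha Hp Hqp Hcross. rewrite hz_hinv_mul.
  assert (Hc : -1 < hx p * hy q - hy p * hx q < 1) by nra.
  set (w := hz q - hz p - / 2 * (hx p * hy q - hy p * hx q)).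
  assert (Hw : - (- hz q - a / 2) <= w <= - hz q - a / 2) by (unfold w; lra).
  nra.
Qed.

Lemma Balpha_transfer_ineq (alpha a Z s h hq w : R) :
  0 < alpha -> 0 < a -> 3 < a * alpha -> a < Z -> 0 < s -> h <= 1 -> 0 <= hq ->
  w ^ 2 <= (Z - a / 2) ^ 2 -> s * hq + s ^ 2 * Z ^ 2 <= alpha ^ 2 ->
  s * h + s ^ 2 * w ^ 2 <= alpha ^ 2.
Proof.
  intros Halpha Ha Haalpha HaZ Hs Hh Hhq Hw Hin.
  assert (Hsh : s * h <= s) by nra.
  assert (Hsw : s ^ 2 * w ^ 2 <= s ^ 2 * (Z - a / 2) ^ 2)
    by (apply Rmult_le_compat_l; nra).
  destruct (Rle_lt_dec 2 (s * Z * a)) as [Hlarge | Hsmall].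
  - (* the gain [s^2 Z a - s^2 a^2 / 4] in the vertical term pays for [s * h] *)
    assert (s ^ 2 * (Z - a / 2) ^ 2 <= s ^ 2 * Z ^ 2 - 3 / 4 * s * (s * Z * a)) by nra.
    nra.
  - (* [s < 2 / a^2] and [s Z < 2 / a], so everything is below [6 / a^2 < alpha^2] *)
    assert (Hs1 : s * a ^ 2 < 2) by nra.
    assert (HsZa : 0 < s * Z * a) by (repeat apply Rmult_lt_0_compat; lra).
    assert (Hs2 : (s * Z * a) ^ 2 < 4) by nra.
    assert (Hsq : (Z - a / 2) ^ 2 <= Z ^ 2) by nra.
    assert (a ^ 2 * (s + s ^ 2 * Z ^ 2) < a ^ 2 * alpha ^ 2) by nra.
    assert (s + s ^ 2 * Z ^ 2 < alpha ^ 2) by nra.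
    nra.
Qed.

Lemma hmul_hinv_h0 (q : Hpt) : hmul (hinv h0) q = q.
Proof. destruct q as [x y z]. unfold hmul, hinv, h0; cbn [hx hy hz]. f_equal; ring. Qed.

Section Tube.

Variables (alpha a b : R) (p q : Hpt).
Hypotheses (Halpha : 0 < alpha) (Ha : 1 <= a) (Haalpha : 3 < a * alpha) (Hb : b <= 1 / 2)
  (Hp : inT a b p) (Hq : inT a b q) (Hqp : hz q <= hz p).

Lemma dset_h0_subset r : dset alpha h0 q r -> dset alpha p q r.
Proof.
  destruct Hp as [Hzp Hrp], Hq as [Hzq Hrq].
  assert (Hb0 : 0 < b) by (pose proof (sqrt_pos (hx p ^ 2 + hy p ^ 2)); unfold rho in Hrp; lra).
  assert (Hp2 : hsq p < 1 / 4) by (pose proof (hsq_lt_of_rho_lt p b Hb0 Hrp); nra).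
  assert (Hq2 : hsq q < 1 / 4) by (pose proof (hsq_lt_of_rho_lt q b Hb0 Hrq); nra).
  assert (Hhq : 0 <= hsq q) by (unfold hsq; nra).
  assert (Hcross : (hx p * hy q - hy p * hx q) ^ 2 < 1).
  { pose proof (cross_sq_le p q).
    assert (hsq p * hsq q <= 1 / 4 * (1 / 4))
      by (apply Rmult_le_compat; unfold hsq in *; nra).
    lra. }
  intros [Hr Hin]. split; [exact Hr|].
  rewrite hmul_hinv_h0, in_Balpha_dil in Hin. apply in_Balpha_dil.
  apply Balpha_transfer_ineq with a (- hz q) (hsq q); try lra.
  - apply pow_lt, Rinv_0_lt_compat, Hr.
  - pose proof (hsq_hinv_mul_le p q). lra.
  - now apply hz_hinv_mul_sq_le.
Qed.

Lemma d_alpha_le_r_of : d_alpha alpha p q <= r_of alpha q.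
Proof.
  apply (is_inf_le_subset (dset alpha h0 q) (dset alpha p q)).
  - now apply d_alpha_is_inf.
  - now apply d_alpha_is_inf.
  - exact dset_h0_subset.
Qed.

End Tube.

Theorem lemma2p4 (alpha : R) (Halpha : 0 < alpha)
  (Hdist : is_distance (d_alpha alpha)) :
  exists a1 b1 : R, 1 <= a1 /\ 0 < b1 < 1 /\
    forall a b : R, a > a1 -> 0 < b < b1 ->
    forall p q : Hpt,
      ~ ball alpha q (r_of alpha q) p ->
      ~ ball alpha p (r_of alpha p) q ->
      ~ (inT a b p /\ inT a b q).
Proof.
  assert (H3 : 0 < 3 / alpha) by (apply Rdiv_lt_0_compat; lra).
  exists (1 + 3 / alpha), (1 / 2). split; [lra|]. split; [lra|].
  intros a b Ha Hb p q Hpq Hqp [Hp Hq].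
  assert (Haalpha : 3 < a * alpha).
  { replace 3 with (3 / alpha * alpha) by (field; lra). apply Rmult_lt_compat_r; lra. }
  destruct (Rle_lt_dec (hz q) (hz p)) as [Hle | Hlt].
  - apply Hpq, (d_alpha_le_r_of alpha a b); lra || assumption.
  - apply Hqp, (d_alpha_le_r_of alpha a b); lra || assumption.
Qed.
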